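(* Let $n\ge 1$ and $m\ge 2$ be integers with $m\nmid n$, let $\ell=\lfloor n/m\rfloor$, and let $G_{n,m}=\{\theta_{m,0}+\sum_{k=1}^{\ell}a_k\theta_{m,k}: a_k\in\mathbb{F}_2\}$. If $f,g\in G_{n,m}$, then $f\circ g\in G_{n,m}$. In particular, $(G_{n,m},\circ)$ is a monoid.
   Context: For $x=(x_0,\dots,x_{n-1})\in\mathbb{F}_2^n$, indices of coordinates are taken modulo $n$. For a nonnegative integer $k$, the map $\theta_{m,k}\colon\mathbb{F}_2^n\to\mathbb{F}_2^n$ is defined by $\theta_{m,k}(x)=y$ with $y_i=x_{i+mk}\prod_{1\le j\le mk-1,\ m\nmid j}(x_{i+j}+1)$ for $i\in\{0,\dots,n-1\}$; $\theta_{m,0}$ is the identity map. Sums of maps are pointwise sums over $\mathbb{F}_2^n$, and $\circ$ denotes composition of maps. *)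

(* Vectors of F_2^n are {ffun 'I_n -> bool};
   F_2 addition is xor (addb), F_2 multiplication is andb, x+1 is negb x. *)
From mathcomp Require Import all_boot.
Set Implicit Arguments. Unset Strict Implicit. Unset Printing Implicit Defensive.

Definition vec (n : nat) := {ffun 'I_n -> bool}.

Definition shift (n : nat) (i : 'I_n) (j : nat) : 'I_n :=
  Ordinal (ltn_pmod (i + j) (leq_ltn_trans (leq0n i) (ltn_ord i))).

Definition theta (n m k : nat) (x : vec n) : vec n :=
  if k is 0 then x else
  [ffun i => x (shift i (m * k)) &&
     \big[andb/true]_(1 <= j < m * k | ~~ (m %| j)) ~~ x (shift i j)].

Definition Gmap (n m : nat) (a : nat -> bool) (x : vec n) : vec n :=
  [ffun i => theta m 0 x i (+)
     \big[addb/false]_(1 <= k < (n %/ m).+1) (a k && theta m k x i)].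

Definition inG (n m : nat) (f : vec n -> vec n) : Prop :=
  exists a : nat -> bool, forall x, f x = Gmap m a x.

From mathcomp Require Import all_boot all_algebra zify.
Set Implicit Arguments. Unset Strict Implicit. Unset Printing Implicit Defensive.
Import GRing.Theory.

(* Write theta_k(x)_i = x_{i+mk} /\ [x vanishes at every off-grid offset j < mk, m \notdvd j].
   Two such windows starting at offsets that differ by a non-multiple of m cannot overlap, and
   this gives theta_k o G_b = sum_j b'_j theta_{k+j} with b'_0 = 1.  Moreover theta_k = 0 for
   k > n/m, since m \notdvd n makes position mk reappear at the off-grid offset mk - n.  Hence
   composing G_a with G_b multiplies the polynomials 1 + sum_k a_k X^k and 1 + sum_k b_k X^k
   truncated at degree n/m, whose product again has constant coefficient 1. *)

Lemma shift0 n (i : 'I_n) : shift i 0 = i.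
Proof. by apply: val_inj; rewrite /= addn0 modn_small. Qed.

Lemma shiftD n (i : 'I_n) u v : shift (shift i u) v = shift i (u + v).
Proof. by apply: val_inj; rewrite /= modnDml addnA. Qed.

Lemma shift_addn n (i : 'I_n) u : shift i (u + n) = shift i u.
Proof. by apply: val_inj; rewrite /= addnA modnDr. Qed.

Definition offgrid_free n m l (x : vec n) (i : 'I_n) : bool :=
  \big[andb/true]_(1 <= j < l | ~~ (m %| j)) ~~ x (shift i j).

Lemma offgrid_freeP n m l (x : vec n) i :
  reflect (forall j, 0 < j -> j < l -> ~~ (m %| j) -> x (shift i j) = false)
          (offgrid_free m l x i).
Proof.
rewrite /offgrid_free big_all_cond; apply: (iffP allP) => [H j j0 jl jm | H j].
  by move: (H j); rewrite mem_index_iota j0 jl /= jm => /(_ isT) /negbTE.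
by rewrite mem_index_iota => /andP[j0 jl]; apply/implyP => jm; rewrite H.
Qed.

Lemma offgrid_free0 n m (x : vec n) i : offgrid_free m 0 x i.
Proof. by rewrite /offgrid_free big_geq. Qed.

Lemma offgrid_freeD n m a b (x : vec n) i : m %| a ->
  offgrid_free m (a + b) x i = offgrid_free m a x i && offgrid_free m b x (shift i a).
Proof.
move=> ma; apply/offgrid_freeP/andP => [H | [/offgrid_freeP Ha /offgrid_freeP Hb]].
  split; apply/offgrid_freeP => j j0 jl jm; first by apply: H; lia.
  by rewrite shiftD H ?dvdn_addr //; lia.
move=> j j0 jl jm; case: (ltngtP j a) => [ja | aj | ja]; first exact: Ha.
  have Ej : j = a + (j - a) by lia.
  by rewrite Ej -shiftD Hb //; [lia | lia | rewrite Ej dvdn_addr in jm].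
by rewrite ja ma in jm.
Qed.

Lemma theta_succE n m k (x : vec n) i :
  theta m k.+1 x i = x (shift i (m * k.+1)) && offgrid_free m (m * k.+1) x i.
Proof. by rewrite /theta ffunE. Qed.

Lemma thetaP n m t (x : vec n) i : 0 < t ->
  reflect (x (shift i (m * t)) /\
           forall j, 0 < j -> j < m * t -> ~~ (m %| j) -> x (shift i j) = false)
          (theta m t x i).
Proof. by case: t => // t _; rewrite theta_succE; apply: (iffP andP) => -[? /offgrid_freeP]. Qed.

Lemma theta_addn n m k t (x : vec n) i :
  theta m (k + t) x i = offgrid_free m (m * k) x i && theta m t x (shift i (m * k)).
Proof.
case: k => [|k]; first by rewrite muln0 shift0 offgrid_free0.
case: t => [|t]; first by rewrite addn0 theta_succE andbC.
rewrite addSn !theta_succE -addSn mulnDr offgrid_freeD ?dvdn_mulr // shiftD.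
by rewrite andbCA.
Qed.

Lemma theta_window n m t s (x : vec n) i p j : 0 < t -> 0 < s ->
  theta m t x (shift i p) -> 0 < j -> j < m * t -> ~~ (m %| j) ->
  theta m s x (shift i (p + j)) = false.
Proof.
move=> t0 s0 /(thetaP _ _ _ t0) [xt Zt] j0 jt jm.
apply/negP => /(thetaP _ _ _ s0) [xs Zs]; rewrite shiftD in xs.
have ms0 : 0 < m * s by rewrite muln_gt0 s0 andbT lt0n; apply: contraTneq jt => ->.
(* Whichever window ends first, its endpoint is an off-grid point of the other one. *)
case: (ltngtP (j + m * s) (m * t)) => [lt | gt | eq].
- by rewrite -addnA -shiftD Zt ?dvdn_addl ?dvdn_mulr // in xs; lia.
- have Ej : m * t = j + (m * t - j) by lia.
  have off : ~~ (m %| m * t - j).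
    by apply: contra jm => d; rewrite -(dvdn_addl j d) -Ej dvdn_mulr.
  by rewrite shiftD Ej addnA -shiftD Zs // in xt; lia.
- by move: jm; rewrite -(dvdn_addl j (dvdn_mulr s (dvdnn m))) eq dvdn_mulr.
Qed.

Lemma Gmap_window n m b t (x : vec n) i p j : 0 < t ->
  theta m t x (shift i p) -> 0 < j -> j < m * t -> ~~ (m %| j) ->
  Gmap m b x (shift i (p + j)) = false.
Proof.
move=> t0 th j0 jt jm; have /(thetaP _ _ _ t0) [_ Zt] := th.
rewrite /Gmap ffunE /= -shiftD Zt // shiftD big1_seq // => s.
by rewrite mem_index_iota => /andP[_ /andP[s0 _]]; rewrite (theta_window t0 s0 th) ?andbF.
Qed.

Lemma Gmap_neq n m b (x : vec n) i : Gmap m b x i != x i ->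
  exists2 t, 0 < t & theta m t x i.
Proof.
have [/hasP[t] | /hasPn none] := boolP (has (fun t => theta m t x i) (index_iota 1 (n %/ m).+1)).
  by rewrite mem_index_iota => /andP[t0 _] th _; exists t.
rewrite /Gmap ffunE /= big1_seq ?addbF ?eqxx // => t /andP[_ /none /negbTE ->].
by rewrite andbF.
Qed.

Lemma Gmap_grid_false_of_neq n m b k (x : vec n) i p : p < m * k -> ~~ (m %| p) ->
  Gmap m b x (shift i p) != x (shift i p) ->
  (forall v, p < v -> v < m * k -> ~~ (m %| v) -> x (shift i v) = false) ->
  Gmap m b x (shift i (m * k)) = false.
Proof.
move=> pk pm /Gmap_neq[t t0 th] Zx.
have /(thetaP _ _ _ t0) [xt _] := th; rewrite shiftD in xt.
have ptm : ~~ (m %| p + m * t) by rewrite dvdn_addl ?dvdn_mulr.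
have kt : m * k < p + m * t.
  case: (ltngtP (m * k) (p + m * t)) => // [lt | eq]; last by rewrite -eq dvdn_mulr in ptm.
  have mt0 : 0 < m * t by rewrite muln_gt0 t0 andbT lt0n; apply: contraTneq pk => ->.
  by rewrite Zx // in xt; lia.
have Ek : m * k = p + (m * k - p) by lia.
rewrite Ek (Gmap_window b t0 th) //; try lia.
by apply: contra pm => d; rewrite -(dvdn_addl p d) -Ek dvdn_mulr.
Qed.

Lemma theta_Gmap n m b k (x : vec n) i :
  theta m k (Gmap m b x) i = offgrid_free m (m * k) x i && Gmap m b x (shift i (m * k)).
Proof.
case: k => [|k]; first by rewrite muln0 shift0 offgrid_free0.
rewrite theta_succE andbC; set y := Gmap m b x; set l := m * k.+1.
have [yl|_] := boolP (y (shift i l)); last by rewrite !andbF.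
rewrite !andbT; apply/eqP/negPn/negP => neq.
(* If the windows of x and y below l differ, then at the last off-grid point where x or y
   is set the two disagree, and that point hides position l from y. *)
pose P v := [&& 0 < v, v < l, ~~ (m %| v) & x (shift i v) || y (shift i v)].
have [/existsP[v0 Pv] | /existsPn none] := boolP [exists v : 'I_l, P v]; last first.
  have free (w : vec n) : (forall v, w (shift i v) -> x (shift i v) || y (shift i v)) ->
      offgrid_free m l w i.
    move=> wxy; apply/offgrid_freeP => v v0 vl vm; apply/negbTE/negP => /wxy xy.
    by have := none (Ordinal vl); rewrite /P v0 vl vm xy.
  by rewrite !free ?eqxx // in neq => v ->; rewrite ?orbT.
have exP : exists v, P v by exists v0.
have ubP w : P w -> w <= l by case/and4P => _ /ltnW.
have [p /and4P[p0 pl pm pxy] pmax] := ex_maxnP exP ubP.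
have Zx v : p < v -> v < l -> ~~ (m %| v) -> x (shift i v) = false.
  move=> pv vl vm; apply/negbTE/negP => xv.
  have v_gt0 : 0 < v by lia.
  by have := pmax v; rewrite /P v_gt0 vl vm xv => /(_ isT); lia.
suff /(Gmap_grid_false_of_neq pl pm)/(_ Zx) : y (shift i p) != x (shift i p) by rewrite /y yl.
apply: contra neq => /eqP ypxp; have xp : x (shift i p) by rewrite ypxp orbb in pxy.
have notfree (w : vec n) : w (shift i p) -> offgrid_free m l w i = false.
  by move=> wp; apply/negbTE/offgrid_freeP => /(_ p p0 pl pm); rewrite wp.
by rewrite !notfree ?ypxp.
Qed.

Lemma theta_vanish n m t (x : vec n) i : 0 < m -> ~~ (m %| n) -> n %/ m < t ->
  theta m t x i = false.
Proof.
move=> m0 mn Lt; have t0 : 0 < t by case: t Lt.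
have nt : n < m * t by rewrite mulnC -ltn_divLR.
apply/negP => /(thetaP _ _ _ t0) [xt Z].
have Et : m * t = (m * t - n) + n by lia.
have off : ~~ (m %| m * t - n).
  by apply: contra mn => d; rewrite -(dvdn_addl n d) addnC -Et dvdn_mulr.
have ilt := ltn_ord i.
by rewrite Et shift_addn Z // in xt; lia.
Qed.

Section Combinations.

Local Open Scope ring_scope.

Definition theta_comb n m (p : {poly bool}) (x : vec n) (i : 'I_n) : bool :=
  \sum_(0 <= s < (n %/ m).+1) p`_s * theta m s x i.

Definition Gpoly (L : nat) (a : nat -> bool) : {poly bool} :=
  \poly_(k < L.+1) ((k == 0)%N || a k).

Definition Gmul (L : nat) (a b : nat -> bool) (s : nat) : bool :=
  (Gpoly L a * Gpoly L b)`_s.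

Lemma Gmap_comb n m a (x : vec n) i : Gmap m a x i = theta_comb m (Gpoly (n %/ m) a) x i.
Proof.
rewrite /Gmap ffunE /theta_comb /Gpoly [RHS]big_nat_recl // coef_poly /= big_add1 /=.
by congr (_ + _); apply: eq_big_nat => k /andP[_ kL]; rewrite coef_poly ltnS kL.
Qed.

Lemma theta_comb_sum n m I (r : seq I) (F : I -> {poly bool}) (x : vec n) i :
  theta_comb m (\sum_(k <- r) F k) x i = \sum_(k <- r) theta_comb m (F k) x i.
Proof.
rewrite /theta_comb exchange_big /=; apply: eq_bigr => s _.
by rewrite coef_sum mulr_suml.
Qed.

Lemma theta_combZ n m c p (x : vec n) i :
  theta_comb m (c *: p) x i = c * theta_comb m p x i.
Proof. by rewrite /theta_comb mulr_sumr; apply: eq_bigr => s _; rewrite coefZ mulrA. Qed.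

End Combinations.

Section Truncation.

Local Open Scope ring_scope.

Variables (n m : nat) (x : vec n) (i : 'I_n).
Hypotheses (m_gt0 : (0 < m)%N) (m_ndvd_n : ~~ (m %| n)%N).

Lemma theta_comb_widen N p : (n %/ m < N)%N ->
  theta_comb m p x i = \sum_(0 <= s < N) p`_s * theta m s x i.
Proof.
move=> LN; rewrite /theta_comb (big_cat_nat (leq0n _) LN) /=.
rewrite [X in _ = _ + X]big1_seq ?addr0 // => s /andP[_].
by rewrite mem_index_iota => /andP[Ls _]; rewrite theta_vanish ?mulr0.
Qed.

Lemma theta_comb_XnM k p :
  theta_comb m ('X^k * p) x i = \sum_(0 <= t < (n %/ m).+1) p`_t * theta m (k + t) x i.
Proof.
rewrite (@theta_comb_widen (k + (n %/ m).+1)) ?ltn_addl //.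
rewrite (big_cat_nat (leq0n k) (leq_addr _ _)) /=.
rewrite big1_seq ?add0r => [|s]; last first.
  by rewrite mem_index_iota coefXnM => /andP[_ /andP[_ ->]]; rewrite mul0r.
rewrite -{1}(add0n k) big_addn addKn; apply: eq_big_nat => t _.
by rewrite coefXnM ltnNge leq_addl addnK addnC.
Qed.

Lemma theta_Gmap_comb b k :
  theta m k (Gmap m b x) i = theta_comb m ('X^k * Gpoly (n %/ m) b) x i.
Proof.
rewrite theta_Gmap Gmap_comb theta_comb_XnM /theta_comb.
rewrite -[_ && _]/(_ * _ : bool) mulr_sumr; apply: eq_bigr => t _.
by rewrite theta_addn -[_ && _]/(_ * _ : bool) mulrCA.
Qed.

Lemma Gmap_comp a b :
  Gmap m a (Gmap m b x) i = Gmap m (Gmul (n %/ m) a b) x i.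
Proof.
transitivity (theta_comb m (Gpoly (n %/ m) a * Gpoly (n %/ m) b) x i).
  rewrite Gmap_comb [in RHS]/Gpoly poly_def mulr_suml theta_comb_sum {1}/theta_comb big_mkord.
  by apply: eq_bigr => k _; rewrite theta_Gmap_comb -scalerAl theta_combZ coef_poly ltn_ord.
rewrite Gmap_comb; apply: eq_big_nat => s /andP[_ sL]; rewrite coef_poly sL.
by case: s {sL} => [|s] //=; rewrite /Gmul coef0M !coef_poly.
Qed.

End Truncation.

Theorem theorem1 (n m : nat) (hn : 1 <= n) (hm : 2 <= m) (hmn : ~~ (m %| n)) :
  (forall f g : vec n -> vec n, inG m f -> inG m g -> inG m (f \o g))
  /\ inG m (@id (vec n)).
Proof.
split.
  move=> f g [a fE] [b gE]; exists (Gmul (n %/ m) a b) => x.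
  by apply/ffunP => i; rewrite /= gE fE Gmap_comp // ltnW.
exists (fun=> false) => x; apply/ffunP => i.
by rewrite /Gmap ffunE big1 ?addbF.
Qed.
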